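(* Let $G$ be a graph such that (i) $G[N[v]]$ is a unit interval graph for every $v\in V(G)$, and (ii) $G$ has no induced subgraph isomorphic to $C_4\cup K_1$. Let $X$ be the set of vertices $w_1\in V(G)$ for which there exist $w_2,\dots,w_6\in V(G)$ with $G[\{w_1,\dots,w_6\}]\cong\overline{C_6}$. Then $G[X]$ is co-bipartite.
   Context: A unit interval graph is an intersection graph of unit-length intervals on the real line. $C_n$ is the cycle of length $n$, $K_1$ a single vertex, $\cup$ denotes disjoint union, $\overline{H}$ the complement ($\overline{C_6}$ is the triangular prism). A graph is co-bipartite if its complement is bipartite. $N[v]$ is the closed neighborhood. *)

From Stdlib Require Import Reals.
From mathcomp Require Import all_boot.
Set Implicit Arguments.
Unset Strict Implicit.
Unset Printing Implicit Defensive.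

Definition simple_graph (T : finType) (e : rel T) : Prop :=
  symmetric e /\ irreflexive e.

Definition closed_nbhd (T : finType) (e : rel T) (v : T) : pred T :=
  fun x => (x == v) || e v x.

(* G[S] is a unit interval graph: each vertex x of S gets a unit interval
   [f x, f x + 1] of the real line, and two distinct vertices of S are adjacent
   iff their intervals intersect. *)
Definition unit_interval_on (T : finType) (e : rel T) (S : pred T) : Prop :=
  exists f : T -> R, forall x y, S x -> S y -> x <> y ->
    (e x y <-> Rle (Rabs (Rminus (f x) (f y))) R1).

Definition has_induced (T : finType) (e : rel T) (k : nat) (H : rel 'I_k) : Prop :=
  exists f : 'I_k -> T, injective f /\ forall i j, e (f i) (f j) = H i j.

(* C_4 ∪ K_1 on 'I_5: 0-1-2-3-0 is a 4-cycle, vertex 4 is isolated. *)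
Definition C4K1 : rel 'I_5 := fun i j =>
  (i < 4) && (j < 4) && ((j == (i + 1) %% 4 :> nat) || (i == (j + 1) %% 4 :> nat)).

(* The cycle C_6 on 'I_6 and its complement (the triangular prism). *)
Definition C6 : rel 'I_6 := fun i j =>
  (j == (i + 1) %% 6 :> nat) || (i == (j + 1) %% 6 :> nat).
Definition coC6 : rel 'I_6 := fun i j => (i != j) && ~~ C6 i j.

Definition in_prism (T : finType) (e : rel T) (w : T) : Prop :=
  exists f : 'I_6 -> T, [/\ injective f, forall i j, e (f i) (f j) = coC6 i j
                          & exists i, f i = w].

Definition cobipartite_on (T : finType) (e : rel T) (X : T -> Prop) : Prop :=
  exists c : T -> bool, forall x y, X x -> X y -> x <> y -> ~~ e x y -> c x <> c y.

(* Fix one induced prism, with triangles a and b and matching a_i -- b_i.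
   Inside a closed neighbourhood a unit interval graph has neither a claw
   nor an induced C_4, and G has no induced C_4 + K_1; applied to the three
   squares a_i a_j b_j b_i of the prism and to the claws centred at its
   vertices, this forces every vertex v of G to be complete to one triangle
   and to meet the other one in at most one vertex.  Two non-adjacent
   vertices complete to the same triangle, say a, both miss some common b_i,
   and then a_i is the centre of a claw.  Hence, as soon as G contains a
   prism, the vertices complete to a and those complete to b are two cliques
   covering G, so all of G is co-bipartite. *)

From Stdlib Require Import Reals Lra Classical.
From mathcomp Require Import all_boot.

Set Implicit Arguments.
Unset Strict Implicit.
Unset Printing Implicit Defensive.

Section UnitIntervals.

Local Open Scope R_scope.

Lemma unit_interval_claw_free (u x y z : R) :
  Rabs (u - x) <= 1 -> Rabs (u - y) <= 1 -> Rabs (u - z) <= 1 ->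
  1 < Rabs (x - y) -> 1 < Rabs (x - z) -> 1 < Rabs (y - z) -> False.
Proof. unfold Rabs; repeat destruct Rcase_abs; lra. Qed.

Lemma unit_interval_C4_free (p q r s : R) :
  Rabs (p - q) <= 1 -> Rabs (q - r) <= 1 -> Rabs (r - s) <= 1 ->
  Rabs (s - p) <= 1 -> 1 < Rabs (p - r) -> 1 < Rabs (q - s) -> False.
Proof. unfold Rabs; repeat destruct Rcase_abs; lra. Qed.

End UnitIntervals.

Lemma avoid_two_small (T : finType) (A B : pred T) :
  #|A| + #|B| < #|T| -> exists x, ~~ A x && ~~ B x.
Proof.
case: (pickP [pred x | ~~ A x && ~~ B x]) => [x Px | noAB]; first by exists x.
rewrite -cardUI ltnNge => /negP[]; apply: (leq_trans _ (leq_addr _ _)).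
apply/subset_leq_card/subsetP => x _; move: (noAB x).
by rewrite !unfold_in /=; case: (A x); case: (B x).
Qed.

Section LocallyUnitInterval.

Variables (T : finType) (e : rel T).
Hypothesis e_sym : symmetric e.
Hypothesis e_irr : irreflexive e.

Local Notation N := (closed_nbhd e).

Lemma closed_nbhd_sym u v : N u v = N v u.
Proof. by rewrite /closed_nbhd eq_sym e_sym. Qed.

Lemma closed_nbhd_refl u : N u u.
Proof. by rewrite /closed_nbhd eqxx. Qed.

Lemma edge_closed_nbhd u v : e u v -> N u v.
Proof. by rewrite /closed_nbhd => ->; rewrite orbT. Qed.

Lemma edge_neq u v : e u v -> u <> v.
Proof. by move=> uv Euv; rewrite Euv e_irr in uv. Qed.

Lemma closed_nbhdN_neq u v : ~~ N u v -> v <> u.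
Proof. by rewrite /closed_nbhd negb_or => /andP[/eqP]. Qed.

Lemma closed_nbhdN_nadj u v : ~~ N u v -> ~~ e v u.
Proof. by rewrite /closed_nbhd negb_or e_sym => /andP[]. Qed.

Section Representation.

Local Open Scope R_scope.

Variables (S : pred T) (f : T -> R).
Hypothesis f_rep : forall x y, S x -> S y -> x <> y ->
  (e x y <-> Rabs (f x - f y) <= 1).

Lemma representation_close x y : S x -> S y -> N x y -> Rabs (f x - f y) <= 1.
Proof.
move=> Sx Sy; rewrite /closed_nbhd; case: eqP => [-> _ | /nesym nxy /= xy].
  by rewrite Rminus_diag Rabs_R0; apply: Rle_0_1.
exact/(f_rep Sx Sy nxy).
Qed.

Lemma representation_far x y : S x -> S y -> x <> y -> ~~ e x y ->
  1 < Rabs (f x - f y).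
Proof.
move=> Sx Sy nxy /negP nexy; apply: Rnot_le_lt => close.
exact/nexy/(f_rep Sx Sy nxy).
Qed.

End Representation.

Hypothesis locally_unit_interval : forall v, unit_interval_on e (N v).

Lemma local_claw_free u x y z : N u x -> N u y -> N u z ->
  x <> y -> x <> z -> y <> z -> ~~ e x y -> ~~ e x z -> ~~ e y z -> False.
Proof.
move=> ux uy uz nxy nxz nyz exy exz eyz.
have [f f_rep] := locally_unit_interval u.
have close w := representation_close f_rep (closed_nbhd_refl u) (x := u) (y := w).
apply: (unit_interval_claw_free (close x ux ux) (close y uy uy) (close z uz uz)).
- exact: (representation_far f_rep ux uy nxy exy).
- exact: (representation_far f_rep ux uz nxz exz).
- exact: (representation_far f_rep uy uz nyz eyz).
Qed.

Lemma local_C4_free v p q r s : N v p -> N v q -> N v r -> N v s ->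
  e p q -> e q r -> e r s -> e s p -> p <> r -> q <> s ->
  ~~ e p r -> ~~ e q s -> False.
Proof.
move=> vp vq vr vs pq qr rs sp npr nqs epr eqs.
have [f f_rep] := locally_unit_interval v.
apply: (unit_interval_C4_free (p := f p) (q := f q) (r := f r) (s := f s)).
- exact: (representation_close f_rep vp vq (edge_closed_nbhd pq)).
- exact: (representation_close f_rep vq vr (edge_closed_nbhd qr)).
- exact: (representation_close f_rep vr vs (edge_closed_nbhd rs)).
- exact: (representation_close f_rep vs vp (edge_closed_nbhd sp)).
- exact: (representation_far f_rep vp vr npr epr).
- exact: (representation_far f_rep vq vs nqs eqs).
Qed.

Lemma induced_C4K1 p q r s w :
  e p q -> e q r -> e r s -> e s p -> p <> r -> q <> s -> ~~ e p r -> ~~ e q s ->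
  ~~ N p w -> ~~ N q w -> ~~ N r w -> ~~ N s w -> has_induced e C4K1.
Proof.
move=> pq qr rs sp npr nqs /negPf epr /negPf eqs pw qw rw sw.
have npq := edge_neq pq; have nqr := edge_neq qr.
have nrs := edge_neq rs; have nsp := edge_neq sp.
have nwp := closed_nbhdN_neq pw; have nwq := closed_nbhdN_neq qw.
have nwr := closed_nbhdN_neq rw; have nws := closed_nbhdN_neq sw.
move/closed_nbhdN_nadj/negPf: pw => ewp; move/closed_nbhdN_nadj/negPf: qw => ewq.
move/closed_nbhdN_nadj/negPf: rw => ewr; move/closed_nbhdN_nadj/negPf: sw => ews.
exists (fun i : 'I_5 => nth w [:: p; q; r; s; w] i); split.
  move=> [[|[|[|[|[|i]]]]] Hi] // [[|[|[|[|[|j]]]]] Hj] //= Eij;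
    by [apply: val_inj | exfalso; congruence].
move=> [[|[|[|[|[|i]]]]] Hi] // [[|[|[|[|[|j]]]]] Hj] //=; rewrite /C4K1 /=;
  by rewrite ?e_irr ?pq ?qr ?rs ?sp ?epr ?eqs ?ewp ?ewq ?ewr ?ews //
             e_sym ?pq ?qr ?rs ?sp ?epr ?eqs ?ewp ?ewq ?ewr ?ews.
Qed.

Hypothesis no_induced_C4K1 : ~ has_induced e C4K1.

Definition is_prism (a b : 'I_3 -> T) : Prop :=
  [/\ forall i j, e (a i) (a j) = (i != j), forall i j, e (b i) (b j) = (i != j),
      forall i j, e (a i) (b j) = (i == j) & forall i j, a i <> b j].

Definition complete_to (c : 'I_3 -> T) (v : T) := [forall i, N (c i) v].

Definition sparse_to (c : 'I_3 -> T) (v : T) := #|[pred i | N (c i) v]| <= 1.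

Lemma is_prism_swap a b : is_prism a b -> is_prism b a.
Proof.
case=> aa bb ab nab; split=> // i j; first by rewrite e_sym ab eq_sym.
exact/nesym.
Qed.

Section Prism.

Variables (a b : 'I_3 -> T) (v : T).
Hypothesis ab_prism : is_prism a b.

Lemma prism_square_hit i j : i != j ->
  [|| N (a i) v, N (a j) v, N (b i) v | N (b j) v].
Proof.
have [aa bb ab nab] := ab_prism.
move=> nij; apply: contraT => /norP[ai /norP[aj /norP[bi bj]]].
case: no_induced_C4K1.
apply: (induced_C4K1 (p := a i) (q := a j) (r := b j) (s := b i) (w := v)) => //.
- by rewrite aa.
- by rewrite ab.
- by rewrite bb eq_sym.
- by rewrite e_sym ab.
- by rewrite ab.
- by rewrite ab eq_sym.
Qed.

Lemma prism_square_not_full i j : i != j ->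
  ~~ [&& N (a i) v, N (a j) v, N (b i) v & N (b j) v].
Proof.
have [aa bb ab nab] := ab_prism.
move=> nij; apply/negP; rewrite !(closed_nbhd_sym _ v) => /and4P[ai aj bi bj].
apply: (local_C4_free ai aj bj bi) => //.
- by rewrite aa.
- by rewrite ab.
- by rewrite bb eq_sym.
- by rewrite e_sym ab.
- by rewrite ab.
- by rewrite ab eq_sym.
Qed.

Lemma prism_claw i j : i != j -> N (a i) v -> N (a j) v || N (b i) v.
Proof.
have [aa _ ab nab] := ab_prism.
move=> nij ai; apply: contraT; rewrite negb_or => /andP[aj bi].
case: (local_claw_free (u := a i) (x := v) (y := a j) (z := b i)) => //.
- by apply: edge_closed_nbhd; rewrite aa.
- by apply: edge_closed_nbhd; rewrite ab.
- exact: closed_nbhdN_neq aj.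
- exact: closed_nbhdN_neq bi.
- exact: closed_nbhdN_nadj aj.
- exact: closed_nbhdN_nadj bi.
- by rewrite ab eq_sym.
Qed.

Lemma prism_one_side i : N (a i) v -> ~~ N (b i) v -> complete_to a v && sparse_to b v.
Proof.
move=> ai nbi.
have complete : complete_to a v.
  apply/forallP => j; have [<- // | nij] := eqVneq i j.
  by move: (prism_claw nij ai); rewrite (negPf nbi) orbF.
rewrite complete; apply/card_le1_eqP => j k; rewrite !inE => bj bk.
apply/eqP/contraT => njk; have := prism_square_not_full njk.
by rewrite !(forallP complete) bj bk.
Qed.

End Prism.

Lemma prism_vertex_type a b v : is_prism a b ->
  (complete_to a v && sparse_to b v) || (complete_to b v && sparse_to a v).
Proof.
move=> ab_prism.
case: (pickP [pred i | N (a i) v && ~~ N (b i) v]) => [i /andP[ai nbi] | no_a].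
  by rewrite (prism_one_side ab_prism ai nbi).
case: (pickP [pred i | N (b i) v && ~~ N (a i) v]) => [i /andP[bi nai] | no_b].
  by rewrite (prism_one_side (is_prism_swap ab_prism) bi nai) orbT.
(* Otherwise v sees a_i iff it sees b_i, and the squares leave at most one
   index seen and at most one unseen: too few for three indices. *)
have ab_eq i : N (a i) v = N (b i) v.
  by move: (no_a i) (no_b i) => /=; case: (N (a i) v); case: (N (b i) v).
have few_in : #|[pred i | N (a i) v]| <= 1.
  apply/card_le1_eqP => j k; rewrite !inE => aj ak; apply/eqP/contraT => njk.
  by have := prism_square_not_full v ab_prism njk; rewrite -!ab_eq aj ak.
have few_out : #|[pred i | ~~ N (a i) v]| <= 1.
  apply/card_le1_eqP => j k; rewrite !inE => /negPf aj /negPf ak.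
  apply/eqP/contraT => njk.
  by have := prism_square_hit v ab_prism njk; rewrite -!ab_eq aj ak.
have [i] : exists i, ~~ N (a i) v && ~~ ~~ N (a i) v.
  by apply: avoid_two_small; rewrite card_ord (leq_ltn_trans (leq_add few_in few_out)).
by rewrite negbK andNb.
Qed.

Lemma same_side_adjacent a b x y : is_prism a b ->
  complete_to a x -> sparse_to b x -> complete_to a y -> sparse_to b y ->
  x <> y -> e x y.
Proof.
move=> [_ _ ab _] /forallP ax bx /forallP ay b_y nxy.
have [i /andP[bix biy]] : exists i, ~~ N (b i) x && ~~ N (b i) y.
  by apply: avoid_two_small; rewrite card_ord (leq_ltn_trans (leq_add bx b_y)).
apply/negPn/negP => nexy.
apply: (local_claw_free (ax i) (ay i) (edge_closed_nbhd (v := b i) _) nxy) => //.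
- by rewrite ab.
- exact: closed_nbhdN_neq bix.
- exact: closed_nbhdN_neq biy.
- exact: closed_nbhdN_nadj bix.
- exact: closed_nbhdN_nadj biy.
Qed.

Lemma prism_cobipartite a b (X : T -> Prop) : is_prism a b -> cobipartite_on e X.
Proof.
move=> ab_prism; exists (fun v => complete_to a v && sparse_to b v).
move=> x y _ _ nxy /negP nexy same_side; apply: nexy.
have type_b v : ~~ (complete_to a v && sparse_to b v) -> complete_to b v && sparse_to a v.
  by move/negPf=> not_a; have := prism_vertex_type v ab_prism; rewrite not_a.
case: (boolP (complete_to a x && sparse_to b x)) same_side
  => [/andP[ax bx] /esym/andP[ay b_y] | /type_b/andP[bx ax] /esym/negbT/type_b/andP[b_y ay]].
  exact: same_side_adjacent ab_prism ax bx ay b_y nxy.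
exact: same_side_adjacent (is_prism_swap ab_prism) bx ax b_y ay nxy.
Qed.

(* In [coC6] the two triangles are {0, 2, 4} and {3, 5, 1}, and 2i is matched to 2i + 3. *)
Definition prism_A (i : 'I_3) : 'I_6 := inord (2 * i).
Definition prism_B (i : 'I_3) : 'I_6 := inord ((2 * i + 3) %% 6).

Lemma prism_of_coC6 (g : 'I_6 -> T) :
  injective g -> (forall i j, e (g i) (g j) = coC6 i j) ->
  is_prism (g \o prism_A) (g \o prism_B).
Proof.
move=> g_inj g_ind; split=> i j /=; rewrite ?g_ind; try move/g_inj/(congr1 val);
  rewrite /coC6 /C6 /prism_A /prism_B -?val_eqE /=;
  by case: i => [[|[|[|i]]] ?] //; case: j => [[|[|[|j]]] ?] //; rewrite !inordK.
Qed.

End LocallyUnitInterval.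

Theorem mainTheorem16 (T : finType) (e : rel T) :
  simple_graph e ->
  (forall v : T, unit_interval_on e (closed_nbhd e v)) ->
  ~ has_induced e C4K1 ->
  cobipartite_on e (in_prism e).
Proof.
move=> [e_sym e_irr] locally_ui no_C4K1.
have [[w [g [g_inj g_ind _]]] | no_prism] := classic (exists w, in_prism e w).
  exact: (prism_cobipartite e_sym e_irr locally_ui no_C4K1 _ (prism_of_coC6 g_inj g_ind)).
by exists (fun=> true) => x y x_prism; case: no_prism; exists x.
Qed.
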